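(* Let $1\le k\le d+1$ and let $\Delta_k^d=\operatorname{tconv}\{-e_I: I\subseteq[d+1],\ |I|=k\}\subseteq\mathbb{T}^d$ be the $k$-th tropical hypersimplex. Then $\Delta_k^d$ is the intersection of its $d+1$ cornered halfspaces and the tropical halfspaces $H(\mathbf{0},I)$ with $I$ ranging over all $(d-k+2)$-element subsets of $[d+1]$.
   Context: Tropical arithmetic is min-plus: $a\oplus b=\min(a,b)$, $a\odot b=a+b$; $\mathbb{T}^d=\mathbb{R}^{d+1}/\mathbb{R}(1,\dots,1)$; $\operatorname{tconv}\{v_1,\dots,v_n\}=\{\bigoplus_l\lambda_l\odot v_l:\lambda_l\in\mathbb{R}\}$ (componentwise minimum of $\lambda_l+v_l$). For $I\subseteq[d+1]$, $e_I=\sum_{i\in I}e_i$. For $p\in\mathbb{T}^d$ and nonempty $I\subseteq[d+1]$, the closed tropical halfspace with apex $p$ and type $I$ is $H(p,I)=\{x\in\mathbb{T}^d:\min_{i\in I}(x_i-p_i)\le\min_{j\notin I}(x_j-p_j)\}$ (minimum over the empty set is $+\infty$); equivalently $p+\bigcup_{i\in I}\bar S_i$ where $\bar S_i=\{\xi:\xi_i=\min_m\xi_m\}$. For a tropical polytope with generators $v_1,\dots,v_n$, its $m$-th corner is $c_m=\bigoplus_{l}(-v_{l,m})\odot v_l$ and its $m$-th cornered halfspace is $H(c_m,\{m\})=c_m+\bar S_m$. $\mathbf{0}$ denotes the origin of $\mathbb{T}^d$. *)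

From HB Require Import structures.
From mathcomp Require Import all_boot all_order all_algebra.
From mathcomp Require Import reals.
Set Implicit Arguments. Unset Strict Implicit. Unset Printing Implicit Defensive.
Import Order.TTheory GRing.Theory Num.Theory.
Local Open Scope ring_scope.

(* Points of T^d are represented by representatives in R^{d+1}, i.e.
   functions 'I_d.+1 -> R.  All sets below are invariant under adding
   a constant to every coordinate, so they are preimages of subsets of T^d. *)
Definition vec (R : realType) (n : nat) := 'I_n -> R.

Definition eI (R : realType) (n : nat) (I : {set 'I_n}) : vec R n :=
  fun i => if i \in I then 1 else 0.

(* x in tconv {v_j : j in J}  iff  x = (+)_j lam_j (.) v_j, i.e.
   for each coordinate m, x_m = min_j (lam_j + v_{j,m}). *)
Definition in_tconv (R : realType) (n : nat) (J : finType) (v : J -> vec R n)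
    (x : vec R n) : Prop :=
  exists lam : J -> R, forall m : 'I_n,
    (forall j, x m <= lam j + v j m) /\ (exists j, x m = lam j + v j m).

(* Closed tropical halfspace H(p, I) :
   min_{i in I} (x_i - p_i) <= min_{j notin I} (x_j - p_j)
   (min over the empty set = +oo), written out for nonempty finite I. *)
Definition in_halfspace (R : realType) (n : nat) (p : vec R n)
    (I : {set 'I_n}) (x : vec R n) : Prop :=
  exists2 i, i \in I & forall j, j \notin I -> x i - p i <= x j - p j.

(* c is the m-th corner of tconv {v_j}:
   c_i = min_l (v_{l,i} - v_{l,m})  (= ((+)_l (-v_{l,m}) (.) v_l)_i). *)
Definition is_corner (R : realType) (n : nat) (J : finType) (v : J -> vec R n)
    (m : 'I_n) (c : vec R n) : Prop :=
  forall i : 'I_n,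
    (forall l, c i <= v l i - v l m) /\ (exists l, c i = v l i - v l m).

Definition in_cornered_halfspace (R : realType) (n : nat) (J : finType)
    (v : J -> vec R n) (m : 'I_n) (x : vec R n) : Prop :=
  exists c, is_corner v m c /\ in_halfspace c [set m] x.

Definition ksets (n k : nat) := {I : {set 'I_n} | #|I| == k}.

Definition hypersimplex_gens (R : realType) (d k : nat) :
    ksets d.+1 k -> vec R d.+1 :=
  fun I => fun i => - eI R (val I) i.

Definition in_hypersimplex (R : realType) (d k : nat) (x : vec R d.+1) : Prop :=
  in_tconv (@hypersimplex_gens R d k) x.

From HB Require Import structures.
From mathcomp Require Import all_boot all_order all_algebra.
From mathcomp Require Import reals.
From mathcomp Require Import zify lra.
Set Implicit Arguments. Unset Strict Implicit. Unset Printing Implicit Defensive.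
Import Order.TTheory GRing.Theory Num.Theory.
Local Open Scope ring_scope.

(* Both families of halfspaces cut out the same set as two elementary
   conditions on a representative x:  max x - min x <= 1, and the minimum of x
   is attained at least k times.  The cornered halfspaces of the hypersimplex
   encode the first condition, since its m-th corner vanishes at m and has
   all entries >= -1.  The halfspaces H(0, I), |I| = d + 2 - k, encode
   the second one, since such an I meets every k-set.  Conversely, a point
   satisfying both conditions lies in the tropical convex hull of the -e_I:
   by [in_tconv_iff] it suffices that each coordinate m maximizes x + e_I
   for some k-set I, and I = {m} plus k - 1 minimizers of x does it. *)

Lemma exists_set_between (T : finType) (p : nat) (A B : {set T}) :
  A \subset B -> (#|A| <= p <= #|B|)%N ->
  exists C : {set T}, [/\ A \subset C, C \subset B & #|C| = p].
Proof.
move Hn: (p - #|A|)%N => n; elim: n A Hn => [|n IH] A Hn AB /andP[pA pB].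
  by exists A; split => //; lia.
have /subsetPn[y yB yA] : ~~ (B \subset A).
  by apply/negP => /subset_leq_card; lia.
have [|||C [yAC CB cardC]] := IH (y |: A); rewrite ?cardsU1 ?yA //; try lia.
  by rewrite subUset sub1set yB AB.
by exists C; split => //; apply: subset_trans yAC; apply: subsetUr.
Qed.

Section TropicalHull.

Variables (R : realType) (n : nat) (J : finType) (v : J -> vec R n.+1).

(* The coefficient of v l can always be taken to be max_j (x_j - v l j). *)
Lemma in_tconv_iff (x : vec R n.+1) :
  in_tconv v x <->
  (forall m, exists l, forall j, x j - v l j <= x m - v l m).
Proof.
split=> [[lam H] m | H].
  have [l xm] := (H m).2.
  by exists l => j; have := (H j).1 l; lra.
exists (fun l => (fun j => x j - v l j)
  [arg max_(j > ord0) (x j - v l j)]%O) => m.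
split=> [l | ].
  by case: arg_maxP => // j _ /(_ m isT); rewrite -lerBlDr.
have [l maxl] := H m; exists l.
case: arg_maxP => // j _ /(_ m isT) jmax.
by apply/eqP; rewrite -subr_eq eq_le maxl andbT; exact: jmax.
Qed.

Lemma corner_diag (m : 'I_n.+1) (c : vec R n.+1) : is_corner v m c -> c m = 0.
Proof. by move=> /(_ m) [_ [l ->]]; rewrite subrr. Qed.

Lemma exists_corner (l0 : J) (m : 'I_n.+1) : exists c, is_corner v m c.
Proof.
exists (fun i => (fun l => v l i - v l m) [arg min_(l < l0) (v l i - v l m)]%O).
move=> i; split; last by eexists.
by move=> l; case: arg_minP => // l' _; apply.
Qed.

Lemma in_tconv_cornered (x : vec R n.+1) (m : 'I_n.+1) :
  in_tconv v x -> in_cornered_halfspace v m x.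
Proof.
move=> /[dup] [[lam /(_ m) [_ [l0 _]]]] /in_tconv_iff hx.
have [c cc] := exists_corner l0 m.
exists c; split=> //; exists m; first by rewrite inE.
move=> j _; rewrite (corner_diag cc).
have [l maxl] := hx j.
have [cle _] := cc j.
by have := maxl m; have := cle l; lra.
Qed.

End TropicalHull.

Section Minimizers.

Variables (R : realType) (n : nat).

Definition minset (x : vec R n) : {set 'I_n} := [set i | [forall j, x i <= x j]].

Lemma minsetP (x : vec R n) i : reflect (forall j, x i <= x j) (i \in minset x).
Proof. by rewrite inE; apply: forallP. Qed.

Lemma halfspace0_of_minset (x : vec R n) (I : {set 'I_n}) :
  (n < #|I| + #|minset x|)%N -> in_halfspace (fun _ => 0) I x.
Proof.
move=> big; have : (0 < #|I :&: minset x|)%N.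
  have := cardsUI I (minset x); have := max_card (I :|: minset x).
  by rewrite card_ord; lia.
rewrite card_gt0 => /set0Pn[i]; rewrite inE => /andP[iI /minsetP imin].
by exists i => // j _; rewrite !subr0.
Qed.

End Minimizers.

Lemma minset_of_halfspaces (R : realType) (n p : nat) (x : vec R n.+1) :
  (1 <= p <= n.+1)%N ->
  (forall I : {set 'I_n.+1}, #|I| = (n.+2 - p)%N -> in_halfspace (fun _ => 0) I x) ->
  (p <= #|minset x|)%N.
Proof.
move=> /andP[p_gt0 p_le] hI; rewrite leqNgt; apply/negP => small.
have [|J [minJ _ cardJ]] := @exists_set_between _ p.-1 (minset x) setT (subsetT _).
  by rewrite cardsT card_ord; lia.
have [|i iJ imin] := hI (~: J).
  by have := cardsC J; rewrite card_ord; lia.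
have [i0 _ i0min] := @arg_minP _ R _ ord0 xpredT x isT.
have i0J : i0 \in J by apply: (subsetP minJ); apply/minsetP => j; exact: i0min.
have /(subsetP minJ) : i \in minset x.
  apply/minsetP => j; apply: le_trans (i0min j isT).
  by have := imin i0; rewrite !subr0 inE i0J; apply.
by move: iJ; rewrite inE => /negbTE ->.
Qed.

Section Hypersimplex.

Variables (R : realType) (d k : nat).

Local Notation g := (@hypersimplex_gens R d k).

Lemma hypersimplex_gensE l i : g l i = if i \in val l then -1 else 0.
Proof. by rewrite /hypersimplex_gens /eI; case: ifP; rewrite ?oppr0. Qed.

Lemma hypersimplex_gens_bounds l i : -1 <= g l i <= 0.
Proof. by rewrite hypersimplex_gensE; case: ifP; rewrite ?lexx ?ler0N1 ?lerN10. Qed.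

Lemma cornered_hypersimplex_span (x : vec R d.+1) m j :
  in_cornered_halfspace g m x -> x m <= x j + 1.
Proof.
case=> c [cc [i]]; rewrite inE => /eqP-> hm.
have [->|jm] := eqVneq j m; first by rewrite lerDl.
have := hm j; rewrite inE jm (corner_diag cc) subr0 => /(_ isT) hmj.
have [_ [l cj]] := cc j.
have /andP[? ?] := hypersimplex_gens_bounds l j.
have /andP[? ?] := hypersimplex_gens_bounds l m.
lra.
Qed.

Lemma in_hypersimplex_iff (x : vec R d.+1) : (1 <= k)%N ->
  @in_hypersimplex R d k x <->
  (forall m j, x m <= x j + 1) /\ (k <= #|minset x|)%N.
Proof.
rewrite /in_hypersimplex in_tconv_iff => k_gt0; split=> [hx | [span kmin] m].
  split=> [m j | ].
    have [l /(_ m) maxl] := hx j.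
    have /andP[? ?] := hypersimplex_gens_bounds l j.
    have /andP[? ?] := hypersimplex_gens_bounds l m.
    lra.
  have [i0 _ i0min] := @arg_minP _ R _ ord0 xpredT x isT.
  have [l maxl] := hx i0.
  rewrite -(eqP (valP l)); apply/subset_leq_card/subsetP => j jl.
  apply/minsetP => j'; apply: le_trans (i0min j' isT).
  have := maxl j; rewrite [g l j]hypersimplex_gensE jl.
  by have /andP[? ?] := hypersimplex_gens_bounds l i0; lra.
have [|C [mC Cm cardC]] :=
  @exists_set_between _ k [set m] (m |: minset x) (subsetUl _ _).
  by rewrite cards1 k_gt0 (leq_trans kmin) // subset_leq_card // subsetUr.
exists (exist _ C (introT eqP cardC)) => j /=.
rewrite !hypersimplex_gensE (subsetP mC m (set11 m)).
case: ifP => [jC | _]; last by have := span j m; lra.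
move: (subsetP Cm j jC); rewrite in_setU1 => /orP[/eqP-> | /minsetP jmin]; first lra.
by have := jmin m; lra.
Qed.

End Hypersimplex.

Theorem mainTheorem3 (R : realType) (d k : nat) (hk1 : (1 <= k)%N)
    (hk2 : (k <= d.+1)%N) :
  forall x : vec R d.+1,
    @in_hypersimplex R d k x <->
    ((forall m : 'I_d.+1,
        in_cornered_halfspace (@hypersimplex_gens R d k) m x) /\
     (forall I : {set 'I_d.+1}, #|I| = (d.+2 - k)%N ->
        in_halfspace (fun _ => 0) I x)).
Proof.
move=> x; split=> [hx | [hc hI]].
  split=> [m | I cardI]; first by apply: in_tconv_cornered; exact: hx.
  have [_ kmin] := (in_hypersimplex_iff x hk1).1 hx.
  apply: halfspace0_of_minset; rewrite cardI.
  by rewrite (leq_trans _ (leq_add (leqnn _) kmin)) // subnK // ltnW.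
apply/(in_hypersimplex_iff x hk1); split.
  by move=> m j; apply: cornered_hypersimplex_span.
by apply: (minset_of_halfspaces _ hI); rewrite hk1.
Qed.
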